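(* Let $\theta$ be a discrete valuation on Johnstone's dcpo $\mathcal J$ (with the Scott topology) with total mass $\theta(\mathcal J)=1-r$, where $r>0$. Then $\theta+r\mu$ is not a minimal valuation, where $\mu(U)=1$ for non-empty Scott-open $U$ and $\mu(\emptyset)=0$.
   Context: Johnstone's dcpo: $\mathcal J=\mathbb N\times(\mathbb N\cup\{\infty\})$ ordered by $(a,b)\le(c,d)$ iff either ($a=c$ and $b\le d$) or ($d=\infty$ and $b\le c$). A valuation on a space $X$ is a strict, monotone, modular map $\mathcal OX\to[0,\infty]$; it is continuous if it preserves directed suprema of opens. Continuous valuations are ordered pointwise, forming a dcpo $\mathcal VX$ with pointwise directed suprema. A simple valuation is a finite sum $\sum_{i=1}^n r_i\delta_{x_i}$ ($r_i\in[0,\infty)$, $\delta_x$ the Dirac valuation); a discrete valuation is a countable sum $\sum_{i=1}^\infty r_i\delta_{x_i}$ (supremum of its partial sums). The minimal valuations are the elements of the smallest subset of $\mathcal VX$ containing the simple valuations and closed under directed suprema. *)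

From mathcomp Require Import all_boot all_order all_algebra.
From mathcomp Require Import all_classical all_reals ereal.
Set Implicit Arguments. Unset Strict Implicit. Unset Printing Implicit Defensive.
Import Order.TTheory GRing.Theory Num.Theory.
Local Open Scope classical_set_scope.
Local Open Scope ring_scope.
Local Open Scope ereal_scope.

(* N ∪ {∞} is encoded as option nat, with None = ∞. *)
Definition le_ni (b d : option nat) : Prop :=
  match b, d with
  | _, None => True
  | None, Some _ => False
  | Some b, Some d => (b <= d)%N
  end.

Definition J := (nat * option nat)%type.

Definition leJ (p q : J) : Prop :=
  (p.1 = q.1 /\ le_ni p.2 q.2) \/ (q.2 = None /\ le_ni p.2 (Some q.1)).

Definition directed {T : Type} (le : T -> T -> Prop) (D : set T) : Prop :=
  (exists x, D x) /\
  forall x y, D x -> D y -> exists z, [/\ D z, le x z & le y z].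

Definition is_sup {T : Type} (le : T -> T -> Prop) (D : set T) (s : T) : Prop :=
  (forall d, D d -> le d s) /\
  (forall u, (forall d, D d -> le d u) -> le s u).

Definition scott_open {T : Type} (le : T -> T -> Prop) (U : set T) : Prop :=
  (forall x y, U x -> le x y -> U y) /\
  (forall D s, directed le D -> is_sup le D s -> U s -> exists d, D d /\ U d).

(* Encoding convention: a map O X -> [0,∞] is represented by a function
   set T -> \bar R which is 0 on non-open sets ("normalized"), so that
   elements of V X correspond bijectively to such functions. *)
Section Valuations.
Context {R : realType} {T : Type} (isopen : set T -> Prop).

Definition normalized (v : set T -> \bar R) : Prop :=
  forall U, ~ isopen U -> v U = 0.

Definition is_valuation (v : set T -> \bar R) : Prop :=
  [/\ normalized v,
      (forall U, isopen U -> 0 <= v U),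
      v set0 = 0,
      (forall U V, isopen U -> isopen V -> U `<=` V -> v U <= v V) &
      (forall U V, isopen U -> isopen V ->
         v U + v V = v (U `|` V) + v (U `&` V))].

Definition is_cvaluation (v : set T -> \bar R) : Prop :=
  is_valuation v /\
  forall F : set (set T), (forall U, F U -> isopen U) ->
    directed (fun U V => U `<=` V) F ->
    v (\bigcup_(U in F) U) = ereal_sup [set v U | U in F].

Definition leV (v w : set T -> \bar R) : Prop :=
  forall U, isopen U -> v U <= w U.

Definition dsup (D : set (set T -> \bar R)) : set T -> \bar R :=
  fun U => ereal_sup [set d U | d in D].

Definition delta_pt (x : T) (U : set T) : \bar R :=
  if `[< U x >] then 1 else 0.

Definition simple_val (v : set T -> \bar R) : Prop :=
  exists (n : nat) (r : nat -> R) (x : nat -> T),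
    (forall i, (0 <= r i)%R) /\
    forall U, v U = if `[< isopen U >]
                    then \sum_(i < n) (r i)%:E * delta_pt (x i) U
                    else 0.

Definition discrete_val (v : set T -> \bar R) : Prop :=
  is_cvaluation v /\
  exists (r : nat -> R) (x : nat -> T),
    (forall i, (0 <= r i)%R) /\
    forall U, isopen U ->
      v U = ereal_sup [set \sum_(i < n) (r i)%:E * delta_pt (x i) U | n in [set: nat]].

Definition minimal_val (v : set T -> \bar R) : Prop :=
  forall S : set (set T -> \bar R),
    (forall w, S w -> is_cvaluation w) ->
    (forall w, simple_val w -> S w) ->
    (forall D, D `<=` S -> directed leV D -> S (dsup D)) ->
    S v.

Definition mu_val : set T -> \bar R :=
  fun U => if `[< isopen U >] then (if `[< exists x, U x >] then 1 else 0) else 0.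

End Valuations.

(* Call a continuous valuation v on J admissible if v(J) = +oo, or v is tight
   (for every e > 0 there is N0 with v(J) <= v(trunc N0 k) + e for all k) and
   v(corner N) tends to 0, where corner N = {(a, b) | a, b >= N}.  The valuation
   theta + r mu has mass 1 but gives mass at least r to every corner, so it is
   not admissible; yet every minimal valuation is, because simple valuations are
   admissible (their atoms sit in finitely many columns) and admissibility is
   preserved by directed suprema v of finite mass.
   Tightness of v is inherited from a member of the family close to v(J).  If
   instead v(corner N) > t > 0 for all N, let M be the supremum over d in the
   family and over P of inf_k d(notch P k), where notch P k keeps the points of
   height >= k outside the columns P <= a < k.  Far enough up the family, the
   part of corner N above height k still has mass about t, by tightness; it
   meets notch P k only inside a corner N' of negligible mass and otherwise lies
   in notch N' k, so modularity gives inf_k d'(notch N' k) >= M + t/4,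
   contradicting the choice of M. *)

From mathcomp Require Import all_boot all_order all_algebra.
From mathcomp Require Import all_classical all_reals ereal.
From mathcomp Require Import lra.
Set Implicit Arguments. Unset Strict Implicit. Unset Printing Implicit Defensive.
Import Order.TTheory GRing.Theory Num.Theory.
Local Open Scope classical_set_scope.

Section ScottOpen.
Variables (T : Type) (le : T -> T -> Prop).

Lemma scott_openT : scott_open le setT.
Proof. by split => // D s [[x Dx] _] _ _; exists x. Qed.

Lemma scott_openU U V : scott_open le U -> scott_open le V -> scott_open le (U `|` V).
Proof.
move=> [upU inaccU] [upV inaccV]; split.
  by move=> x y [Ux|Vx] xy; [left; exact: upU xy|right; exact: upV xy].
move=> D s dirD supD [Us|Vs].
  by have [d [Dd Ud]] := inaccU D s dirD supD Us; exists d; split => //; left.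
by have [d [Dd Vd]] := inaccV D s dirD supD Vs; exists d; split => //; right.
Qed.

Lemma scott_openI U V : scott_open le U -> scott_open le V -> scott_open le (U `&` V).
Proof.
move=> [upU inaccU] [upV inaccV]; split.
  by move=> x y [Ux Vx] xy; split; [exact: upU xy|exact: upV xy].
move=> D s dirD supD [Us Vs].
have [d1 [Dd1 Ud1]] := inaccU D s dirD supD Us.
have [d2 [Dd2 Vd2]] := inaccV D s dirD supD Vs.
have [z [Dz d1z d2z]] := dirD.2 _ _ Dd1 Dd2.
by exists z; split => //; split; [exact: upU d1z|exact: upV d2z].
Qed.

Lemma scott_open_bigcup (F : set (set T)) : (forall U, F U -> scott_open le U) ->
  scott_open le (\bigcup_(U in F) U).
Proof.
move=> openF; split.
  by move=> x y [U FU Ux] xy; exists U => //; exact: (openF U FU).1 _ _ Ux xy.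
move=> D s dirD supD [U FU Us].
by have [d [Dd Ud]] := (openF U FU).2 D s dirD supD Us; exists d; split => //; exists U.
Qed.

End ScottOpen.

Lemma le_ni_trans a b c : le_ni a b -> le_ni b c -> le_ni a c.
Proof. by case: a => [a|]; case: b => [b|]; case: c => [c|] //=; apply: leq_trans. Qed.

Lemma leq_le_ni_trans m n b : (m <= n)%N -> le_ni (Some n) b -> le_ni (Some m) b.
Proof. exact: (@le_ni_trans (Some m) (Some n)). Qed.

Lemma leJ_anti p q : leJ p q -> leJ q p -> p = q.
Proof.
case: p => a [b|]; case: q => c [d|]; rewrite /leJ /=;
  move=> [[pq1 pq2]|[pq1 pq2]] [[qp1 qp2]|[qp1 qp2]] //.
by rewrite pq1; congr (_, Some _); apply/eqP; rewrite eqn_leq pq2.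
by rewrite pq1.
Qed.

Lemma directed_finite_column (D : set J) : directed leJ D ->
  (forall d, D d -> d.2 <> None) -> exists a, forall d, D d -> d.1 = a.
Proof.
move=> [[x Dx] dirD] finD; exists x.1 => d Dd.
have [z [Dz xz dz]] := dirD _ _ Dx Dd.
by case: xz dz => [[-> _]|[/(finD _ Dz)]] // [[-> _]|[/(finD _ Dz)]].
Qed.

Lemma column_bounded_max (D : set J) a k : D !=set0 ->
  (forall d, D d -> d.1 = a /\ exists2 b, d.2 = Some b & (b <= k)%N) ->
  exists2 dm, D dm & forall d, D d -> leJ d dm.
Proof.
move=> [x Dx] colD; pose P n := `[< exists2 d, D d & d.2 = Some n >].
have Pex : exists n, P n.
  by have [_ [b xb _]] := colD _ Dx; exists b; apply/asboolP; exists x.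
have Pub n : P n -> (n <= k)%N.
  by move=> /asboolP [d /colD [_ [b -> bk]] [<-]].
case: (ex_maxnP Pex Pub) => h /asboolP [dm Ddm dmh] maxh; exists dm => // d Dd.
have [da [b db _]] := colD _ Dd; left; rewrite da (colD _ Ddm).1 db dmh; split => //=.
by apply: maxh; apply/asboolP; exists d.
Qed.

Lemma directed_sup_notin (D : set J) s : directed leJ D -> is_sup leJ D s -> ~ D s ->
  s.2 = None /\ forall k, exists2 d, D d & d.1 = s.1 /\ le_ni (Some k) d.2.
Proof.
move=> dirD [ubs lubs] Dns.
have finD d : D d -> d.2 <> None.
  case: d => a b Dd /= binf; apply: Dns; move: Dd; rewrite binf => Dd.
  case: s ubs {lubs} => c e ubs.
  by case: (ubs _ Dd) => /= [[<- be]|[_ //]]; case: e ubs be.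
have [a cola] := directed_finite_column dirD finD.
have [unbounded|bounded] := pselect (forall k, exists2 d, D d & le_ni (Some k) d.2).
  have sinf : s.2 = None.
    case Es: s.2 => [b|] //; have [d Dd bd] := unbounded b.+1.
    case: (ubs _ Dd) => [[_]|[]]; rewrite Es //.
    by case: (d.2) bd => //= c /leq_trans h /h; rewrite ltnn.
  have sa : s.1 = a.
    have : leJ s (a, None).
      by apply: lubs => d Dd; left; split; [exact: cola|case: (d.2)].
    by case=> [[]|[_]] //; rewrite sinf.
  split=> // k; have [d Dd kd] := unbounded k.
  by exists d; rewrite ?sa ?(cola _ Dd).
have [k lowD] : exists k, forall d, D d -> ~ le_ni (Some k) d.2.
  apply: contrapT => hk; apply: bounded => k; apply: contrapT => nk.
  by apply: hk; exists k => d Dd kd; apply: nk; exists d.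
have [dm Ddm ubdm] : exists2 dm, D dm & forall d, D d -> leJ d dm.
  apply: (@column_bounded_max _ a k dirD.1) => d Dd; split; first exact: cola.
  case: d.2 (finD _ Dd) (lowD _ Dd) => [b _ /negP|//].
  by rewrite -ltnNge => /ltnW; exists b.
by exfalso; apply: Dns; rewrite (leJ_anti (lubs _ ubdm) (ubs _ Ddm)).
Qed.

Definition upper_region (C : nat -> Prop) (h : nat -> nat) : set J :=
  [set p | C p.1 /\ le_ni (Some (h p.1)) p.2].

(* Right-closedness of C past h c is forced by the points (c', None), which lie
   above every (c, b) with b <= c'. *)
Lemma scott_open_upper_region C h :
  (forall c c', C c -> (h c <= c')%N -> C c') -> scott_open leJ (upper_region C h).
Proof.
move=> Cright; split.
  move=> [a b] [c d] [/= Ca hb] [[/= <- bd]|[/= -> bc]].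
  - by split => //; exact: le_ni_trans bd.
  - by split => //=; apply: Cright Ca _; case: b hb bc => //= b; apply: leq_trans.
move=> D s dirD supD Us; case: (pselect (D s)) => [Ds|Dns]; first by exists s.
have [_ /(_ (h s.1)) [d Dd [ds hd]]] := directed_sup_notin dirD supD Dns.
by exists d; split => //; rewrite /upper_region /= ds; split => //; exact: Us.1.
Qed.

Definition corner N := upper_region (fun c => N <= c)%N (fun=> N).
Definition trunc N0 k := upper_region (fun=> True) (fun c => if (c < N0)%N then 0%N else k).
Definition notch P k := upper_region (fun c => c < P \/ k <= c)%N (fun=> k).

Lemma scott_open_corner N : scott_open leJ (corner N).
Proof. by apply: scott_open_upper_region => c c' _; apply. Qed.

Lemma scott_open_trunc N0 k : scott_open leJ (trunc N0 k).
Proof. exact: scott_open_upper_region. Qed.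

Lemma scott_open_notch P k : scott_open leJ (notch P k).
Proof. by apply: scott_open_upper_region => c c' _ /= kc; right. Qed.

Lemma corner_subset N1 N2 : (N1 <= N2)%N -> corner N2 `<=` corner N1.
Proof.
by move=> N12 [a b] [/= N2a N2b]; split; [exact: leq_trans N2a|exact: leq_le_ni_trans N12 N2b].
Qed.

Lemma notch_subset P k1 k2 : (k1 <= k2)%N -> notch P k2 `<=` notch P k1.
Proof.
move=> k12 [a b] [/= Pa k2b]; split; last exact: leq_le_ni_trans k12 k2b.
by case: Pa => [|k2a]; [left|right; exact: leq_trans k2a].
Qed.

Lemma notch_corner_subset P k N N' : (P <= N)%N -> (N' <= k)%N ->
  notch P k `&` corner N `<=` corner N'.
Proof.
move=> PN N'k [a b] [[/= [aP|ka] kb] [/= Na _]].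
- by have := leq_trans PN Na; rewrite leqNgt aP.
- by split; [exact: leq_trans ka|exact: leq_le_ni_trans N'k kb].
Qed.

Lemma notch_trunc_corner_subset P k N0 N N' : (P <= N')%N -> (N0 <= N)%N -> (N' <= k)%N ->
  notch P k `|` (trunc N0 k `&` corner N) `<=` notch N' k `|` corner N'.
Proof.
move=> PN' N0N N'k [a b] [[/= [aP|ka] kb]|[[_ /= Wb] [/= Na _]]].
- by left; split => //=; left; exact: leq_trans aP PN'.
- by left; split => //=; right.
- have kb : le_ni (Some k) b by move: Wb; rewrite ltnNge (leq_trans N0N Na).
  have [aN'|N'a] := ltnP a N'; first by left; split => //=; left.
  by right; split => //=; exact: leq_le_ni_trans N'k kb.
Qed.

Section ExtendedSup.
Context {R : realType}.
Local Open Scope ereal_scope.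

Lemma bounded_fin_num (x : \bar R) (s : R) : 0 <= x -> x <= s%:E -> x \is a fin_num.
Proof. by move=> x0 xs; rewrite ge0_fin_numE // (le_lt_trans xs) // ltry. Qed.

Lemma ereal_sup_adde_le {X : Type} (A : set X) (f g : X -> \bar R) (S : \bar R) :
  (forall x, A x -> 0 <= f x) -> (forall x, A x -> 0 <= g x) -> A !=set0 ->
  (forall x y, A x -> A y -> f x + g y <= S) ->
  ereal_sup (f @` A) + ereal_sup (g @` A) <= S.
Proof.
move=> f0 g0 [x0 Ax0] fgS; case ES: S => [s| |]; last first.
- by have := le_trans (adde_ge0 (f0 _ Ax0) (g0 _ Ax0)) (fgS _ _ Ax0 Ax0); rewrite ES leeNy_eq.
- exact: leey.
have gfin y : A y -> g y \is a fin_num.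
  move=> Ay; apply: (bounded_fin_num (s := s) (g0 _ Ay)); rewrite -ES.
  exact: le_trans (leeDr _ (f0 _ Ax0)) (fgS _ _ Ax0 Ay).
have supf_g y : A y -> ereal_sup (f @` A) + g y <= s%:E.
  move=> Ay; rewrite -leeBrDr ?gfin //; apply/ereal_supP => _ [x Ax <-].
  by rewrite leeBrDr ?gfin // -ES; exact: fgS.
have supf_fin : ereal_sup (f @` A) \is a fin_num.
  apply: (bounded_fin_num (s := s)).
    by apply: le_trans (f0 _ Ax0) _; apply: ereal_sup_ubound; exists x0.
  exact: le_trans (leeDl _ (g0 _ Ax0)) (supf_g _ Ax0).
rewrite -leeBrDl //; apply/ereal_supP => _ [y Ay <-].
by rewrite leeBrDl //; exact: supf_g.
Qed.

Lemma ereal_sup_adde_directed {X : Type} (A : set X) (f g : X -> \bar R) :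
  (forall x, A x -> 0 <= f x) -> (forall x, A x -> 0 <= g x) -> A !=set0 ->
  (forall x y, A x -> A y -> exists2 z, A z & f x + g y <= f z + g z) ->
  ereal_sup [set f x + g x | x in A] = ereal_sup (f @` A) + ereal_sup (g @` A).
Proof.
move=> f0 g0 A0 dirA; apply/le_anti/andP; split.
  by apply/ereal_supP => _ [x Ax <-]; apply: leeD; apply: ereal_sup_ubound; exists x.
apply: ereal_sup_adde_le => // x y Ax Ay; have [z Az fgz] := dirA x y Ax Ay.
by apply: le_trans fgz _; apply: ereal_sup_ubound; exists z.
Qed.

End ExtendedSup.

Lemma directed_cover_finite {T : Type} (F : set (set T)) (x : nat -> T) n :
  directed (fun U V => U `<=` V) F ->
  exists2 U, F U & forall i, (i < n)%N -> (\bigcup_(V in F) V) (x i) -> U (x i).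
Proof.
move=> [[U0 FU0] dirF]; elim: n => [|n [U FU Ux]]; first by exists U0.
case: (pselect ((\bigcup_(V in F) V) (x n))) => [[V FV Vxn]|xn_out].
  have [W [FW UW VW]] := dirF _ _ FU FV; exists W => // i.
  rewrite ltnS leq_eqVlt => /predU1P [-> _|/Ux Uxi /Uxi /UW //]; exact: VW.
by exists U => // i; rewrite ltnS leq_eqVlt => /predU1P [->|/Ux].
Qed.

Lemma dsup_ge {R : realType} {T : Type} (D : set (set T -> \bar R)) d U :
  D d -> (d U <= dsup D U)%E.
Proof. by move=> Dd; apply: ereal_sup_ubound; exists d. Qed.

Section Valuations.
Context {R : realType} {T : Type} (isopen : set T -> Prop).
Hypothesis openU : forall U V, isopen U -> isopen V -> isopen (U `|` V).
Hypothesis openI : forall U V, isopen U -> isopen V -> isopen (U `&` V).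
Local Open Scope ereal_scope.

Lemma dsup_cvaluation (D : set (set T -> \bar R)) :
  (forall d, D d -> is_cvaluation isopen d) -> directed (leV isopen) D ->
  is_cvaluation isopen (dsup D).
Proof.
move=> cvD dirD; have [[d0 Dd0] _] := dirD.
have valD d : D d -> is_valuation isopen d by move=> /cvD [].
have dsup0 U : (forall d, D d -> d U = 0) -> dsup D U = 0.
  move=> D0; apply/le_anti/andP; split; last by rewrite -(D0 _ Dd0) dsup_ge.
  by apply/ereal_supP => _ [d Dd <-]; rewrite D0.
have dsupD U V : isopen U -> isopen V ->
    ereal_sup [set d U + d V | d in D] = dsup D U + dsup D V.
  move=> oU oV; apply: ereal_sup_adde_directed; first 3 last.
  - move=> d1 d2 Dd1 Dd2; have [z [Dz d1z d2z]] := dirD.2 _ _ Dd1 Dd2.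
    by exists z => //; apply: leeD; [exact: d1z|exact: d2z].
  - by move=> d /valD [_ + _ _ _]; apply.
  - by move=> d /valD [_ + _ _ _]; apply.
  - by exists d0.
split; first split.
- by move=> U nU; apply: dsup0 => d /valD [+ _ _ _ _]; apply.
- by move=> U oU; apply: le_trans (dsup_ge _ Dd0); have [_ + _ _ _] := valD _ Dd0; apply.
- by apply: dsup0 => d /valD [].
- move=> U V oU oV UV; apply/ereal_supP => _ [d Dd <-].
  by apply: le_trans (dsup_ge _ Dd); have [_ _ _ + _] := valD _ Dd; apply.
- move=> U V oU oV; have oUV := openU oU oV; have oUIV := openI oU oV.
  rewrite -!dsupD //.
  by congr ereal_sup; apply: eq_imagel => d /valD [_ _ _ _]; apply.
move=> F openF dirF; apply/le_anti/andP; split.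
  apply/ereal_supP => _ [d Dd <-]; rewrite (cvD _ Dd).2 //.
  apply/ereal_supP => _ [U FU <-]; apply: le_trans (dsup_ge _ Dd) _.
  by apply: ereal_sup_ubound; exists U.
apply/ereal_supP => _ [U FU <-]; apply/ereal_supP => _ [d Dd <-].
apply: le_trans (dsup_ge _ Dd); rewrite (cvD _ Dd).2 //.
by apply: ereal_sup_ubound; exists U.
Qed.

Hypothesis open_bigcup : forall F : set (set T), (forall U, F U -> isopen U) ->
  isopen (\bigcup_(U in F) U).

Lemma simple_valE n (r : nat -> R) (x : nat -> T) v :
  (forall U, v U = if `[< isopen U >] then \sum_(i < n) (r i)%:E * delta_pt (x i) U else 0) ->
  forall U, isopen U -> v U = (\sum_(i < n) r i * (x i \in U)%:R)%R%:E.
Proof.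
move=> vE U oU; rewrite vE asboolT // -sumEFin; apply: eq_bigr => i _.
rewrite /delta_pt -[`[< U (x i) >]]/(x i \in U).
by case: (x i \in U); rewrite ?mule1 ?mule0 ?mulr1 ?mulr0.
Qed.

Lemma simple_cvaluation (v : set T -> \bar R) : simple_val isopen v -> is_cvaluation isopen v.
Proof.
move=> [n [r [x [r0 vE']]]]; have vE := simple_valE vE'.
have sum_le U V : U `<=` V ->
    (\sum_(i < n) r i * (x i \in U)%:R <= \sum_(i < n) r i * (x i \in V)%:R)%R.
  move=> UV; apply: ler_sum => i _; rewrite ler_wpM2l // ler_nat.
  by case: (boolP (x i \in U)) => // /set_mem/UV/mem_set ->.
split; first split.
- by move=> U nU; rewrite vE' asboolF.
- by move=> U oU; rewrite vE // lee_fin; apply: sumr_ge0 => i _; rewrite mulr_ge0.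
- by rewrite vE'; case: ifP => // _; apply: big1 => i _; rewrite /delta_pt asboolF ?mule0.
- by move=> U V oU oV UV; rewrite !vE // lee_fin sum_le.
- move=> U V oU oV; have oUV := openU oU oV; have oUIV := openI oU oV.
  rewrite !vE // -!EFinD -!big_split /=; congr EFin.
  apply: eq_bigr => i _; rewrite -!mulrDr in_setU in_setI.
  by case: (x i \in U); case: (x i \in V); rewrite /= ?add0r ?addr0.
move=> F openF dirF; have [U FU Ux] := directed_cover_finite x n dirF.
have oF := open_bigcup openF; have oU := openF _ FU; apply/le_anti/andP; split.
  apply: le_ereal_sup_tmp; exists (v U); first by exists U.
  rewrite !vE // lee_fin; apply: ler_sum => i _; rewrite ler_wpM2l // ler_nat.
  case: (boolP (x i \in \bigcup_(V in F) V)) => //.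
  by move=> /set_mem/(Ux _ (ltn_ord i))/mem_set ->.
apply/ereal_supP => _ [V FV <-]; have oV := openF _ FV.
by rewrite !vE // lee_fin sum_le // => y Vy; exists V.
Qed.

Hypothesis openT : isopen setT.

Lemma valuation_fineK (v : set T -> \bar R) U :
  is_valuation isopen v -> v setT < +oo -> isopen U -> (fine (v U))%:E = v U.
Proof.
move=> [_ v0 _ vle _] vT oU; rewrite fineK // ge0_fin_numE ?v0 //.
exact: le_lt_trans (vle _ _ oU openT (@subsetT _ U)) vT.
Qed.

(* By modularity v(W `&` U) > t - b, as v(W `|` U) <= m; adjoining A loses at most
   v U' >= v(A `&` (W `&` U)), and passing to Z loses at most v U' once more. *)
Lemma valuation_modular_bound (v : set T -> \bar R) (A W U U' Z : set T) (a b c t m : R) :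
  is_valuation isopen v -> v setT <= m%:E ->
  isopen A -> isopen W -> isopen U -> isopen U' -> isopen Z ->
  A `&` (W `&` U) `<=` U' -> A `|` (W `&` U) `<=` Z `|` U' ->
  a%:E < v A -> (m - b)%:E <= v W -> t%:E < v U -> v U' <= c%:E ->
  (a + t - b - 2 * c)%:E < v Z.
Proof.
move=> vval vm oA oW oU oU' oZ sub_cap sub_cup.
have [_ v0 _ vle vmod] := vval.
have vE X : isopen X -> v X = (fine (v X))%:E.
  by move=> oX; rewrite valuation_fineK // (le_lt_trans vm) ?ltry.
have ge0 X : isopen X -> (0 <= fine (v X))%R by move=> oX; rewrite -lee_fin -vE ?v0.
have mono X Y : isopen X -> isopen Y -> X `<=` Y -> (fine (v X) <= fine (v Y))%R.
  by move=> oX oY XY; rewrite -lee_fin -!vE //; exact: vle.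
have modE X Y : isopen X -> isopen Y ->
    (fine (v X) + fine (v Y) = fine (v (X `|` Y)) + fine (v (X `&` Y)))%R.
  move=> oX oY; apply: EFin_inj; have := vmod _ _ oX oY.
  by rewrite (vE _ oX) (vE _ oY) (vE _ (openU oX oY)) (vE _ (openI oX oY)).
have oB := openI oW oU.
have mWU := modE _ _ oW oU; have mAB := modE _ _ oA oB; have mZU' := modE _ _ oZ oU'.
have WUm : (fine (v (W `|` U)) <= m)%R.
  rewrite -lee_fin -vE; last exact: openU.
  exact: le_trans (vle _ _ (openU oW oU) openT (@subsetT _ _)) vm.
have ABc := mono _ _ (openI oA oB) oU' sub_cap.
have AB_ZU' := mono _ _ (openU oA oB) (openU oZ oU') sub_cup.
have ZU'0 := ge0 _ (openI oZ oU').
rewrite (vE _ oA) lte_fin => vA; rewrite (vE _ oW) lee_fin => vW.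
rewrite (vE _ oU) lte_fin => vU; rewrite (vE _ oU') lee_fin => vU'.
rewrite (vE _ oZ) lte_fin; lra.
Qed.

End Valuations.

Local Notation isop := (scott_open leJ).

Lemma mu_val1 {R : realType} {T : Type} (isopen : set T -> Prop) U :
  isopen U -> U !=set0 -> @mu_val R T isopen U = 1%E.
Proof. by move=> oU U0; rewrite /mu_val asboolT // asboolT. Qed.

Section Admissible.
Context {R : realType}.
Local Open Scope ereal_scope.

Definition tight (w : set J -> \bar R) := forall e : R, (0 < e)%R ->
  exists N0, forall k, w setT <= w (trunc N0 k) + e%:E.

Definition corner_null (w : set J -> \bar R) := forall e : R, (0 < e)%R ->
  exists N, w (corner N) <= e%:E.

Definition admissible (w : set J -> \bar R) :=
  is_cvaluation isop w /\ (w setT = +oo \/ tight w /\ corner_null w).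

Definition notch_mass (w : set J -> \bar R) P := ereal_inf [set w (notch P k) | k in [set: nat]].

Lemma notch_mass_le w P k : notch_mass w P <= w (notch P k).
Proof. by apply: ereal_inf_lbound; exists k. Qed.

Lemma notch_mass_tail w N' x : is_valuation isop w ->
  (forall k, (N' <= k)%N -> x <= w (notch N' k)) -> x <= notch_mass w N'.
Proof.
move=> [_ _ _ wmono _] tail; apply/ereal_infP => _ [k _ <-].
apply: le_trans (tail _ (leq_maxr k N')) _.
apply: wmono; [exact: scott_open_notch|exact: scott_open_notch|].
exact: notch_subset (leq_maxl k N').
Qed.

Lemma simple_admissible w : simple_val isop w -> admissible w.
Proof.
move=> wsimple; split.
  exact: (simple_cvaluation (@scott_openU _ leJ) (@scott_openI _ leJ) (@scott_open_bigcup _ leJ)).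
right; move: wsimple => [n [r [x [r0 wE']]]]; have wE := simple_valE wE'.
pose N0 := (\max_(i < n) (x i).1.+1)%N.
have xN0 (i : 'I_n) : ((x i).1 < N0)%N := @leq_bigmax _ (fun i : 'I_n => (x i).1.+1) i.
split=> e e0; exists N0.
  move=> k; rewrite (wE _ (scott_openT _)) (wE _ (scott_open_trunc _ _)).
  have -> : (\sum_(i < n) r i * (x i \in trunc N0 k)%:R =
              \sum_(i < n) r i * (x i \in [set: J])%:R)%R.
    apply: eq_bigr => i _; have xW : trunc N0 k (x i).
      by rewrite /trunc /upper_region /= xN0; case: (x i).2.
    by rewrite !mem_set.
  by rewrite -EFinD lee_fin lerDl ltW.
rewrite (wE _ (scott_open_corner _)) big1 ?lee_fin ?ltW // => i _.
by rewrite memNset ?mulr0 // => -[/= N0x _]; have := xN0 i; rewrite ltnNge N0x.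
Qed.

End Admissible.

Section DirectedSup.
Context {R : realType} (D : set (set J -> \bar R)).
Local Open Scope ereal_scope.
Hypothesis D_admissible : D `<=` admissible.
Hypothesis D_directed : directed (leV isop) D.
Hypothesis dsup_finite : dsup D setT < +oo.

Lemma dsup_is_cvaluation : is_cvaluation isop (dsup D).
Proof.
apply: (@dsup_cvaluation _ _ isop (@scott_openU _ leJ) (@scott_openI _ leJ)) D_directed.
by move=> d /D_admissible [].
Qed.

Lemma dsup_fineK U : isop U -> (fine (dsup D U))%:E = dsup D U.
Proof. by apply: valuation_fineK; [exact: scott_openT|exact: dsup_is_cvaluation.1|]. Qed.

Lemma admissible_below d : D d -> [/\ is_valuation isop d, tight d & corner_null d].
Proof.
move=> Dd; have [[dval _] [dT|[]]] := D_admissible Dd; last by [].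
by have := le_lt_trans (dsup_ge setT Dd) dsup_finite; rewrite dT ltxx.
Qed.

Lemma below_fineK d U : D d -> isop U -> (fine (d U))%:E = d U.
Proof.
move=> Dd; have [dval _ _] := admissible_below Dd.
by apply: valuation_fineK; [exact: scott_openT|exact: dval|exact: le_lt_trans (dsup_ge _ Dd) _].
Qed.

Lemma dsup_tight : tight (dsup D).
Proof.
move=> e e0; have oT := scott_openT leJ.
have [m mE] : exists m, dsup D setT = m%:E by exists (fine (dsup D setT)); rewrite dsup_fineK.
have [d Dd dT] : exists2 d, D d & (m - e / 2)%:E < d setT.
  have : (m - e / 2)%:E < dsup D setT by rewrite mE lte_fin; lra.
  by case/ereal_sup_gt => _ [d Dd <-]; exists d.
have [_ dtight _] := admissible_below Dd.
have [N0 dN0] : exists N0, forall k, d setT <= d (trunc N0 k) + (e / 2)%:E by apply: dtight; lra.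
exists N0 => k; have oW := scott_open_trunc N0 k.
have := dN0 k; have := dsup_ge (trunc N0 k) Dd; move: dT.
rewrite mE -(dsup_fineK oW) -(below_fineK Dd oT) -(below_fineK Dd oW).
rewrite -!EFinD !lte_fin !lee_fin; lra.
Qed.

Lemma notch_mass_grows (t : R) : (0 < t)%R -> (forall N, t%:E < dsup D (corner N)) ->
  forall d1 P (a : R), D d1 -> a%:E < notch_mass d1 P ->
  exists e2 N', D e2 /\ (a + t / 2)%:E <= notch_mass e2 N'.
Proof.
move=> t0 dsup_corner d1 P a Dd1 ad1; pose δ := (t / 8)%R.
have oT := scott_openT leJ.
have [m mE] : exists m, dsup D setT = m%:E by exists (fine (dsup D setT)); rewrite dsup_fineK.
have [d2 Dd2 d2T] : exists2 d2, D d2 & (m - δ)%:E < d2 setT.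
  have : (m - δ)%:E < dsup D setT by rewrite mE lte_fin /δ; lra.
  by case/ereal_sup_gt => _ [d Dd <-]; exists d.
have [e [De d1e d2e]] := D_directed.2 _ _ Dd1 Dd2.
have [_ etight _] := admissible_below De.
have [N0 eN0] : exists N0, forall k, e setT <= e (trunc N0 k) + δ%:E.
  by apply: etight; rewrite /δ; lra.
pose N := maxn N0 P.
have [d3 Dd3 d3N] : exists2 d3, D d3 & t%:E < d3 (corner N).
  by case/ereal_sup_gt: (dsup_corner N) => _ [d Dd <-]; exists d.
have [e2 [De2 ee2 d3e2]] := D_directed.2 _ _ De Dd3.
have [e2val _ e2null] := admissible_below De2.
have [N1 e2N1] : exists N1, e2 (corner N1) <= δ%:E by apply: e2null; rewrite /δ; lra.
pose N' := maxn N1 N; exists e2, N'; split => //.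
have e2T : e2 setT <= m%:E by rewrite -mE; exact: dsup_ge.
have [_ _ _ e2mono _] := e2val.
apply: notch_mass_tail => // k N'k; apply/ltW.
have oW := scott_open_trunc N0 k; have oA := scott_open_notch P k.
have -> : (a + t / 2 = a + t - 2 * δ - 2 * δ)%R by rewrite /δ; lra.
apply: (valuation_modular_bound (@scott_openU _ leJ) (@scott_openI _ leJ) oT e2val e2T
  oA oW (scott_open_corner N) (scott_open_corner N') (scott_open_notch N' k)).
- apply: subset_trans (notch_corner_subset (leq_maxr N0 P) N'k).
  by apply: setIS; exact: subIsetr.
- by apply: notch_trunc_corner_subset => //; rewrite ?leq_max ?leqnn ?orbT.
- apply: (lt_le_trans ad1); apply: le_trans (ee2 _ oA).
  exact: le_trans (notch_mass_le _ _ k) (d1e _ oA).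
- apply: le_trans (ee2 _ oW); have := eN0 k; have := d2e _ oT; move: d2T.
  rewrite -(below_fineK Dd2 oT) -(below_fineK De oT) -(below_fineK De oW).
  by rewrite -EFinD !lte_fin !lee_fin; lra.
- exact: lt_le_trans d3N (d3e2 _ (scott_open_corner N)).
- apply: le_trans _ e2N1; apply: e2mono; try exact: scott_open_corner.
  exact: corner_subset (leq_maxl N1 N).
Qed.

Lemma dsup_corner_null : corner_null (dsup D).
Proof.
move=> t t0; apply: contrapT => dsup_corner.
have {}dsup_corner N : t%:E < dsup D (corner N).
  by rewrite ltNge; apply/negP => small; apply: dsup_corner; exists N.
pose M := ereal_sup [set notch_mass p.1 p.2 | p in [set p | D p.1]].
have [[d0 Dd0] _] := D_directed.
have [m mE] : exists m, dsup D setT = m%:E.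
  by exists (fine (dsup D setT)); rewrite dsup_fineK //; exact: scott_openT.
have M_ub d P : D d -> notch_mass d P <= M by move=> Dd; apply: ereal_sup_ubound; exists (d, P).
have M_fin : M \is a fin_num.
  apply: (bounded_fin_num (s := m)).
    apply: le_trans (M_ub d0 0%N Dd0); apply/ereal_infP => _ [k _ <-].
    by have [[_ + _ _ _] _ _] := admissible_below Dd0; apply; exact: scott_open_notch.
  apply/ereal_supP => _ [[d P] /= Dd <-]; rewrite -mE.
  have [[_ _ _ dmono _] _ _] := admissible_below Dd.
  apply: le_trans (dsup_ge _ Dd).
  apply: le_trans (dmono _ _ (scott_open_notch P 0) (scott_openT _) (@subsetT _ _)).
  exact: notch_mass_le.
have [[d1 P] /= Dd1 d1P] : exists2 p, D p.1 & (fine M - t / 4)%:E < notch_mass p.1 p.2.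
  have : (fine M - t / 4)%:E < M by rewrite -{2}(fineK M_fin) lte_fin; lra.
  by case/ereal_sup_gt => _ [p Dp <-]; exists p.
have [e2 [N' [De2 e2N']]] := notch_mass_grows t0 dsup_corner Dd1 d1P.
have := le_trans e2N' (M_ub _ N' De2); rewrite -(fineK M_fin) lee_fin; lra.
Qed.

End DirectedSup.

Lemma admissible_dsup {R : realType} (D : set (set J -> \bar R)) :
  D `<=` admissible -> directed (leV isop) D -> admissible (dsup D).
Proof.
move=> Dadm Ddir; split; first exact: dsup_is_cvaluation.
have [->|] := eqVneq (dsup D setT) +oo%E; [by left|rewrite -ltey => vfin; right].
by split; [exact: dsup_tight|exact: dsup_corner_null].
Qed.

Local Open Scope ring_scope.

Theorem theorem3p13 (R : realType) (theta : set J -> \bar R) (r : R) :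
  discrete_val (scott_open leJ) theta ->
  theta setT = (1 - r)%:E ->
  0 < r ->
  ~ minimal_val (scott_open leJ)
      (fun U => (theta U + r%:E * @mu_val R J (scott_open leJ) U)%E).
Proof.
move=> [[[_ theta0 _ _ _] _] _] thetaT r0 minimal.
have [_ [total|[_ null]]] := minimal (@admissible R) (fun w => @proj1 _ _)
  (@simple_admissible R) (@admissible_dsup R).
  by move: total; rewrite thetaT mu_val1 ?mule1 //; [exact: scott_openT|exists (0%N, None)].
have r2 : 0 < r / 2 by lra.
have [N] := null _ r2.
rewrite /= mu_val1 ?mule1; [|exact: scott_open_corner|by exists (N, None)].
have := theta0 _ (scott_open_corner N); case: (theta (corner N)) => [x| |] //=.
by rewrite -EFinD !lee_fin; lra.
Qed.
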